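(* Let $d\ge 11$ and set $$\alpha_{-}=2-2\sqrt{\frac{d-4}{3(d-2)}},\qquad \beta_{-}=\frac{2}{3}(d-4)-\frac{1}{3}\sqrt{3(d-2)(d-4)},\qquad u_{-}(y)=1-\frac{\alpha_{-}y^{2}}{y^{2}+\beta_{-}}.$$ Then $u_-\in C^\infty([0,1])$ and $u_-$ solves $$y^{2}(1-y^{2})u''(y)+\big((d-3)y-2y^{3}\big)u'(y)+(d-2)\,u(y)\big(1-u(y)^{2}\big)=0\quad\text{on } [0,1].$$
   Context: Here $d$ denotes the spatial dimension (an integer). Smoothness on $[0,1]$ means one-sided derivatives of all orders exist and are continuous up to the endpoints. *)

From Stdlib Require Import Reals Lra.
From Coquelicot Require Import Coquelicot.
Open Scope R_scope.

Definition I01 (y : R) : Prop := 0 <= y <= 1.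

Definition is_derive_01 (f : R -> R) (x l : R) : Prop :=
  filterlim (fun y => (f y - f x) / (y - x))
            (within (fun y => I01 y /\ y <> x) (locally x)) (locally l).

Definition continuous_01 (f : R -> R) (x : R) : Prop :=
  filterlim f (within I01 (locally x)) (locally (f x)).

Definition derivs_01 (f : R -> R) (D : nat -> R -> R) : Prop :=
  (forall y, I01 y -> D O y = f y) /\
  (forall n y, I01 y -> is_derive_01 (D n) y (D (S n) y)) /\
  (forall n y, I01 y -> continuous_01 (D n) y).

Definition smooth_01 (f : R -> R) : Prop := exists D, derivs_01 f D.

Definition alpha_m (d : nat) : R :=
  2 - 2 * sqrt ((INR d - 4) / (3 * (INR d - 2))).
Definition beta_m (d : nat) : R :=
  2 / 3 * (INR d - 4) - 1 / 3 * sqrt (3 * (INR d - 2) * (INR d - 4)).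
Definition u_m (d : nat) (y : R) : R :=
  1 - alpha_m d * y ^ 2 / (y ^ 2 + beta_m d).

(* u_- = 1 - alpha + alpha beta / (y^2 + beta) is a rational function whose denominator
   never vanishes, because beta_- > 0 exactly when d > 10.  All its derivatives are
   polynomials in y and 1/(y^2 + beta), a class closed under differentiation, so u_- is
   smooth on all of R; and since [0,1] has no isolated points, any tower of one-sided
   derivatives on [0,1] coincides there with the classical derivatives.  Substituting
   u_-, u_-', u_-'' into the equation leaves alpha y^2/(y^2 + beta)^3 times an even
   polynomial of the form c4 y^4 + c2 y^2, and both coefficients vanish because
   sigma = sqrt((d-4)/(3(d-2))) satisfies 3(d-2) sigma^2 = d-4. *)
From Stdlib Require Import Reals Lra Lia List.
From Coquelicot Require Import Coquelicot.
Import ListNotations.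
Open Scope R_scope.

Lemma ball_R_Rabs (a : R) (e : posreal) (z : R) : ball a e z <-> Rabs (z - a) < e.
Proof. reflexivity. Qed.

Lemma is_derive_eq_value (f : R -> R) (x l l' : R) :
  is_derive f x l -> l = l' -> is_derive f x l'.
Proof. intros H <-. exact H. Qed.

Lemma is_derive_01_of_is_derive (f : R -> R) (x l : R) :
  is_derive f x l -> is_derive_01 f x l.
Proof.
  intros H. apply is_derive_Reals in H. apply filterlim_locally. intros eps.
  destruct (H eps (cond_pos eps)) as [del Hdel].
  exists del. intros z hz [_ hzx]. change R in z. apply ball_R_Rabs in hz. apply ball_R_Rabs.
  assert (hzx' : z - x <> 0) by lra.
  specialize (Hdel (z - x) hzx' hz).
  replace (x + (z - x)) with z in Hdel by ring. exact Hdel.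
Qed.

Lemma continuous_01_of_is_derive (f : R -> R) (x l : R) :
  is_derive f x l -> continuous_01 f x.
Proof.
  intros H P HP. apply filter_le_within.
  exact (ex_derive_continuous (K := R_AbsRing) (V := R_NormedModule) f x
           (ex_intro _ l H) P HP).
Qed.

Lemma punctured_I01_proper (x : R) :
  I01 x -> ProperFilter' (within (fun y => I01 y /\ y <> x) (locally x)).
Proof.
  intros hx. constructor; [|apply within_filter, locally_filter].
  intros [e He]. unfold I01 in hx.
  set (m := Rmin (e / 2) (1 / 4)).
  assert (hm_e : m <= e / 2) by apply Rmin_l.
  assert (hm_q : m <= 1 / 4) by apply Rmin_r.
  assert (hm_pos : 0 < m) by (apply Rmin_glb_lt; generalize (cond_pos e); lra).
  destruct (Rle_dec x (1 / 2)).
  - apply (He (x + m)); [|unfold I01; lra].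
    apply ball_R_Rabs. rewrite Rabs_right; generalize (cond_pos e); lra.
  - apply (He (x - m)); [|unfold I01; lra].
    apply ball_R_Rabs. rewrite Rabs_left; generalize (cond_pos e); lra.
Qed.

Lemma is_derive_01_unique (f : R -> R) (x l1 l2 : R) :
  I01 x -> is_derive_01 f x l1 -> is_derive_01 f x l2 -> l1 = l2.
Proof.
  intros hx. pose proof (punctured_I01_proper x hx).
  exact (filterlim_locally_unique _ l1 l2).
Qed.

Lemma is_derive_01_ext (f g : R -> R) (x l : R) :
  I01 x -> (forall y, I01 y -> f y = g y) -> is_derive_01 f x l -> is_derive_01 g x l.
Proof.
  intros hx hfg. pose proof (punctured_I01_proper x hx).
  apply filterlim_ext_loc. exists (mkposreal 1 Rlt_0_1).
  intros z _ [hz _]. rewrite (hfg z hz), (hfg x hx). reflexivity.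
Qed.

Lemma derivs_01_of_is_derive (f : R -> R) (E : nat -> R -> R) :
  (forall y, I01 y -> E O y = f y) ->
  (forall n x, is_derive (E n) x (E (S n) x)) ->
  derivs_01 f E.
Proof.
  intros E0 ED. split; [exact E0|]. split; intros n y _.
  - apply is_derive_01_of_is_derive, ED.
  - exact (continuous_01_of_is_derive _ _ _ (ED n y)).
Qed.

Lemma derivs_01_unique (f : R -> R) (D E : nat -> R -> R) :
  derivs_01 f D -> derivs_01 f E -> forall n y, I01 y -> D n y = E n y.
Proof.
  intros [D0 [D1 _]] [E0 [E1 _]] n. induction n as [|n IH]; intros y hy.
  - rewrite D0, E0; auto.
  - apply (is_derive_01_unique (E n) y); [exact hy| |apply E1, hy].
    apply (is_derive_01_ext (D n)); [exact hy|exact IH|apply D1, hy].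
Qed.

Section ReciprocalQuadratic.

Variable b : R.
Hypothesis b_pos : 0 < b.

Definition recip_quad (y : R) : R := / (y ^ 2 + b).

Lemma recip_quad_denom_neq0 (y : R) : y ^ 2 + b <> 0.
Proof. nra. Qed.

Lemma is_derive_recip_quad (x : R) :
  is_derive recip_quad x (-2 * x * recip_quad x ^ 2).
Proof.
  unfold recip_quad. auto_derive.
  - nra.
  - field. exact (recip_quad_denom_neq0 x).
Qed.

Lemma is_derive_monomial (c : R) (i j : nat) (x : R) :
  is_derive (fun y => c * y ^ i * recip_quad y ^ j) x
    (c * INR i * x ^ pred i * recip_quad x ^ j
     + -2 * c * INR j * x ^ S i * recip_quad x ^ S j).
Proof.
  assert (Hy := is_derive_pow id i x 1 (is_derive_id x)).
  assert (Hg := is_derive_pow _ j x _ (is_derive_recip_quad x)).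
  assert (H := is_derive_scal _ x c _ (is_derive_mult _ _ x _ _ Hy Hg Rmult_comm)).
  eapply is_derive_ext; [|apply (is_derive_eq_value _ _ _ _ H)].
  - intros t. unfold id, mult; simpl. ring.
  - unfold id, mult, plus; simpl. destruct j; simpl; ring.
Qed.

(* A term (c, i, j) stands for the monomial c y^i (y^2 + b)^-j. *)
Definition term : Type := R * nat * nat.

Fixpoint eval_terms (L : list term) (y : R) : R :=
  match L with
  | [] => 0
  | (c, i, j) :: L' => c * y ^ i * recip_quad y ^ j + eval_terms L' y
  end.

Definition deriv_term (t : term) : list term :=
  let '(c, i, j) := t in [(c * INR i, pred i, j); (-2 * c * INR j, S i, S j)].

Definition deriv_terms : list term -> list term := flat_map deriv_term.

Lemma eval_terms_app (L1 L2 : list term) (y : R) :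
  eval_terms (L1 ++ L2) y = eval_terms L1 y + eval_terms L2 y.
Proof.
  induction L1 as [|[[c i] j] L IH]; simpl; [ring|rewrite IH; ring].
Qed.

Lemma is_derive_eval_terms (L : list term) (x : R) :
  is_derive (eval_terms L) x (eval_terms (deriv_terms L) x).
Proof.
  induction L as [|[[c i] j] L IH].
  - simpl. auto_derive; auto.
  - change (deriv_terms ((c, i, j) :: L)) with (deriv_term (c, i, j) ++ deriv_terms L).
    rewrite eval_terms_app.
    apply (is_derive_plus (fun y => c * y ^ i * recip_quad y ^ j)); [|exact IH].
    apply (is_derive_eq_value _ _ _ _ (is_derive_monomial c i j x)).
    simpl. ring.
Qed.

Definition term_derivs (L : list term) (n : nat) : R -> R :=
  eval_terms (Nat.iter n deriv_terms L).

Lemma is_derive_term_derivs (L : list term) (n : nat) (x : R) :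
  is_derive (term_derivs L n) x (term_derivs L (S n) x).
Proof. apply is_derive_eval_terms. Qed.

Definition profile (a y : R) : R := 1 - a * y ^ 2 / (y ^ 2 + b).

Definition profile_terms (a : R) : list term := [(1, 0%nat, 0%nat); (- a, 2%nat, 1%nat)].

Lemma profile_derivs_0 (a y : R) : term_derivs (profile_terms a) 0 y = profile a y.
Proof.
  unfold term_derivs, profile. simpl. unfold recip_quad.
  field. nra.
Qed.

Lemma profile_derivs_1 (a y : R) :
  term_derivs (profile_terms a) 1 y = -2 * a * b * y / (y ^ 2 + b) ^ 2.
Proof.
  unfold term_derivs. simpl. unfold recip_quad.
  field. nra.
Qed.

Lemma profile_derivs_2 (a y : R) :
  term_derivs (profile_terms a) 2 y = -2 * a * b * (b - 3 * y ^ 2) / (y ^ 2 + b) ^ 3.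
Proof.
  unfold term_derivs. simpl. unfold recip_quad.
  field. nra.
Qed.

Lemma profile_ode_residual (n a y : R) :
  y ^ 2 * (1 - y ^ 2) * (-2 * a * b * (b - 3 * y ^ 2) / (y ^ 2 + b) ^ 3)
  + ((n - 3) * y - 2 * y ^ 3) * (-2 * a * b * y / (y ^ 2 + b) ^ 2)
  + (n - 2) * profile a y * (1 - profile a y ^ 2)
  = a * y ^ 2 / (y ^ 2 + b) ^ 3 *
    ((-2 * b + (n - 2) * (1 - a) * (2 - a)) * y ^ 4
     + b * (12 - 2 * n + 6 * b + (n - 2) * (4 - 3 * a)) * y ^ 2).
Proof. unfold profile. field. exact (recip_quad_denom_neq0 y). Qed.

End ReciprocalQuadratic.

Definition sigma_m (d : nat) : R := sqrt ((INR d - 4) / (3 * (INR d - 2))).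

Lemma alpha_m_sigma (d : nat) : alpha_m d = 2 - 2 * sigma_m d.
Proof. reflexivity. Qed.

Lemma sigma_m_sq (d : nat) : (4 <= d)%nat -> 3 * (INR d - 2) * sigma_m d ^ 2 = INR d - 4.
Proof.
  intros hd. apply le_INR in hd. simpl in hd.
  unfold sigma_m. rewrite <- Rsqr_pow2, Rsqr_sqrt.
  - field. lra.
  - apply Rmult_le_pos; [lra|left; apply Rinv_0_lt_compat; lra].
Qed.

Lemma beta_m_sigma (d : nat) :
  (4 <= d)%nat -> beta_m d = 2 / 3 * (INR d - 4) - (INR d - 2) * sigma_m d.
Proof.
  intros hd. pose proof (sigma_m_sq d hd) as hs.
  apply le_INR in hd. simpl in hd.
  assert (hsq : 3 * (INR d - 2) * (INR d - 4) = (3 * (INR d - 2) * sigma_m d) ^ 2)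
    by (rewrite <- hs; ring).
  assert (hs0 : 0 <= sigma_m d) by apply sqrt_pos.
  unfold beta_m. rewrite hsq, sqrt_pow2 by nra. field.
Qed.

(* beta_m d > 0 is equivalent to 3 (d - 2) < 4 (d - 4), i.e. to d > 10. *)
Lemma beta_m_pos (d : nat) : (10 < d)%nat -> 0 < beta_m d.
Proof.
  intros hd. assert (hd4 : (4 <= d)%nat) by lia.
  pose proof (sigma_m_sq d hd4) as hs.
  assert (hs0 : 0 <= sigma_m d) by apply sqrt_pos.
  apply lt_INR in hd. simpl in hd.
  rewrite (beta_m_sigma d hd4). nra.
Qed.

Lemma ode_coeff_quartic (d : nat) : (4 <= d)%nat ->
  -2 * beta_m d + (INR d - 2) * (1 - alpha_m d) * (2 - alpha_m d) = 0.
Proof.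
  intros hd. pose proof (sigma_m_sq d hd).
  rewrite (beta_m_sigma d hd), alpha_m_sigma. nra.
Qed.

Lemma ode_coeff_quadratic (d : nat) : (4 <= d)%nat ->
  12 - 2 * INR d + 6 * beta_m d + (INR d - 2) * (4 - 3 * alpha_m d) = 0.
Proof.
  intros hd. rewrite (beta_m_sigma d hd), alpha_m_sigma. field.
Qed.

Theorem mainTheorem3 (d : nat) (hd : (11 <= d)%nat) :
  smooth_01 (u_m d) /\
  (forall D : nat -> R -> R, derivs_01 (u_m d) D ->
     forall y, I01 y ->
       y ^ 2 * (1 - y ^ 2) * D 2%nat y
       + ((INR d - 3) * y - 2 * y ^ 3) * D 1%nat y
       + (INR d - 2) * u_m d y * (1 - (u_m d y) ^ 2) = 0).
Proof.
  pose proof (beta_m_pos d hd) as hb.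
  set (E := term_derivs (beta_m d) (profile_terms (alpha_m d))).
  assert (hE : derivs_01 (u_m d) E).
  { apply derivs_01_of_is_derive.
    - intros y _. apply profile_derivs_0, hb.
    - intros n x. apply is_derive_term_derivs, hb. }
  split; [exists E; exact hE|].
  intros D hD y hy.
  rewrite (derivs_01_unique _ _ _ hD hE 2 y hy), (derivs_01_unique _ _ _ hD hE 1 y hy).
  unfold E. rewrite profile_derivs_2, profile_derivs_1 by exact hb.
  change (u_m d y) with (profile (beta_m d) (alpha_m d) y).
  rewrite profile_ode_residual by exact hb.
  rewrite ode_coeff_quartic, ode_coeff_quadratic by lia.
  ring.
Qed.
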